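(* Let $X$ and $Y$ be $n\times n$ positive semidefinite Hermitian matrices whose Thompson metric $d=d_T(X,Y)$ is finite. Then $$\|X-Y\|_2\;\le\;\frac{e^d-1}{\sqrt{e^{2d}+1}}\sqrt{\|X\|_2^2+\|Y\|_2^2}\;\le\;2^{\frac12}\,\frac{e^d-1}{\sqrt{e^{2d}+1}}\,\max\big[\|X\|_2,\|Y\|_2\big],$$ where $\|\cdot\|_2$ is the Frobenius norm.
   Context: For Hermitian matrices $A,B$, write $A\le B$ (Löwner order) if $B-A$ is positive semidefinite. For positive semidefinite $X,Y$, the Thompson metric is $d_T(X,Y)=\inf\{\log\alpha:\ \alpha\ge1,\ X\le\alpha Y,\ Y\le\alpha X\}$, with $d_T(X,Y)=+\infty$ if no such $\alpha$ exists. Equivalently, $d_T(X,Y)=\log\max\{M(X/Y),M(Y/X)\}$, where $M(X/Y)=\inf\{\lambda>0:X\le\lambda Y\}$. The Frobenius norm is $\|A\|_2=\sqrt{\operatorname{tr}(A^*A)}$, the Schatten $2$-norm. *)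

From HB Require Import structures.
From mathcomp Require Import all_boot all_order all_algebra.
From mathcomp Require Import sesquilinear spectral.
From mathcomp Require Import complex.
From mathcomp Require Import all_classical all_reals all_analysis.
Set Implicit Arguments. Unset Strict Implicit. Unset Printing Implicit Defensive.
Import Order.TTheory GRing.Theory Num.Theory Num.Def.
Local Open Scope ring_scope.
Local Open Scope classical_set_scope.
Local Open Scope sesquilinear_scope.

Definition hermitianmx (R : realType) (n : nat) (A : 'M[R[i]]_n) : Prop :=
  A^t conjC = A.

(* Positive semidefinite: Hermitian and v A v^* >= 0 for every row vector v
   (in R[i], 0 <= z means z is a nonnegative real). *)
Definition psdmx (R : realType) (n : nat) (A : 'M[R[i]]_n) : Prop :=
  hermitianmx A /\ forall v : 'rV[R[i]]_n, 0 <= (v *m A *m v^t conjC) 0 0.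

Definition loewner_le (R : realType) (n : nat) (A B : 'M[R[i]]_n) : Prop :=
  psdmx (B - A).

Definition thompson (R : realType) (n : nat) (X Y : 'M[R[i]]_n) : \bar R :=
  ereal_inf [set ((ln alpha)%:E : \bar R) | alpha in
    [set alpha : R | 1 <= alpha /\
       loewner_le X ((alpha%:C)%C *: Y) /\ loewner_le Y ((alpha%:C)%C *: X)]].

(* Frobenius norm ||A||_2 = sqrt (tr (A^* A)); the trace is a nonnegative real,
   so we take its real part. *)
Definition frob (R : realType) (n : nat) (A : 'M[R[i]]_n) : R :=
  Num.sqrt (complex.Re (\tr (A^t conjC *m A))).

From Pilot Require Import Defs.
From HB Require Import structures.
From mathcomp Require Import all_boot all_order all_algebra.
From mathcomp Require Import sesquilinear spectral complex.
From mathcomp Require Import all_classical all_reals all_analysis.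
From mathcomp Require Import lra ring.
Set Implicit Arguments. Unset Strict Implicit. Unset Printing Implicit Defensive.
Import Order.TTheory GRing.Theory Num.Theory Num.Def.
Local Open Scope ring_scope.
Local Open Scope sesquilinear_scope.

(* Put a = e^d.  The infimum defining the Thompson metric is attained, so
   X <= aY and Y <= aX.  The trace of the product of the positive semidefinite
   matrices aY - X and aX - Y is nonnegative; expanded, this says
   a (||X||^2 + ||Y||^2) <= (a^2 + 1) Re tr(XY).  Substituting into
   ||X - Y||^2 = ||X||^2 + ||Y||^2 - 2 Re tr(XY) gives the factor
   (a - 1)^2 / (a^2 + 1).  The second inequality is x^2 + y^2 <= 2 max(x, y)^2. *)

Lemma ler_pM_approx (R : realFieldType) (a x y : R) : 0 <= y ->
  (forall e, 0 < e -> exists2 b, b < a + e & x <= b * y) -> x <= a * y.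
Proof.
move=> y_ge0 approx; apply/ler_addgt0Pr => e e_gt0.
have y1_gt0 : 0 < y + 1 by lra.
have [b lt_b le_xb] := approx _ (divr_gt0 e_gt0 y1_gt0).
have : e / (y + 1) * (y + 1) = e by rewrite divfK ?gt_eqF.
have : 0 < e / (y + 1) by exact: divr_gt0.
nra.
Qed.

Lemma sqrt_le_mulr_sqrt (R : rcfType) (c s t : R) :
  0 <= c -> t <= c ^+ 2 * s -> Num.sqrt t <= c * Num.sqrt s.
Proof.
move=> c_ge0 le_t.
rewrite -[c in c * _]ger0_norm // -sqrtr_sqr -sqrtrM ?sqr_ge0 //.
exact: ler_wsqrtr.
Qed.

Lemma sqrt_sum_sqr_le_max (R : rcfType) (x y : R) : 0 <= x -> 0 <= y ->
  Num.sqrt (x ^+ 2 + y ^+ 2) <= Num.sqrt 2 * Num.max x y.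
Proof.
move=> x_ge0 y_ge0; have max_ge0 : 0 <= Num.max x y by rewrite le_max x_ge0.
rewrite -[X in _ * X]ger0_norm // -sqrtr_sqr -sqrtrM // ler_wsqrtr //.
have : x <= Num.max x y by rewrite le_max lexx.
have : y <= Num.max x y by rewrite le_max lexx orbT.
nra.
Qed.

Definition thompson_coef (R : rcfType) (a : R) := (a - 1) / Num.sqrt (a ^+ 2 + 1).

Lemma thompson_coef_ge0 (R : rcfType) (a : R) : 1 <= a -> 0 <= thompson_coef a.
Proof. by move=> a_ge1; rewrite divr_ge0 ?sqrtr_ge0 ?subr_ge0. Qed.

Lemma sub_cross_le_thompson_coef (R : rcfType) (a s t : R) :
  a * s <= (a ^+ 2 + 1) * t -> s - 2 * t <= thompson_coef a ^+ 2 * s.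
Proof.
move=> cross; have a2_gt0 : 0 < a ^+ 2 + 1 by rewrite ltr_wpDl ?sqr_ge0.
rewrite exprMn exprVn (sqr_sqrtr (ltW a2_gt0)) mulrAC ler_pdivlMr //.
nra.
Qed.

Lemma ge0_scaleC_subr (R : rcfType) (a : R) (p q : R[i]) : 0 <= p -> 0 <= q ->
  (0 <= a%:C%C * q - p) = (complex.Re p <= a * complex.Re q).
Proof.
case: p q => [p1 ?] [q1 ?]; rewrite !lecE /= => /andP[/eqP -> _] /andP[/eqP -> _].
by rewrite !(mulr0, mul0r, addr0, subr0) eqxx subr_ge0.
Qed.

Section PsdMatrices.
Variables (R : realType) (n : nat).
Implicit Types (a : R) (A B P X Y : 'M[R[i]]_n) (v : 'rV[R[i]]_n).

Local Notation quad A v := ((v *m A *m v^t*) 0 0).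

(* Unqualified, [hermitianmx] refers to sesquilinear's notion for forms. *)
Lemma hermitianmxB X Y :
  Defs.hermitianmx X -> Defs.hermitianmx Y -> Defs.hermitianmx (X - Y).
Proof.
by rewrite /Defs.hermitianmx => hX hY; rewrite linearB map_mxB /= hX hY.
Qed.

Lemma hermitianmxZ a X : Defs.hermitianmx X -> Defs.hermitianmx (a%:C%C *: X).
Proof.
by rewrite /Defs.hermitianmx => hX; rewrite linearZ /= map_mxZ hX; congr (_ *: _);
  exact: conjc_real.
Qed.

Lemma quad_scale_subr a X Y v :
  quad (a%:C%C *: Y - X) v = a%:C%C * quad Y v - quad X v.
Proof. by rewrite mulmxBr mulmxBl -scalemxAr -scalemxAl !mxE. Qed.

Lemma loewner_le_scaleP a X Y : psdmx X -> psdmx Y ->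
  loewner_le X (a%:C%C *: Y) <->
  forall v, complex.Re (quad X v) <= a * complex.Re (quad Y v).
Proof.
move=> [hX qX] [hY qY]; split=> [[_ qYX] v | le_quad].
  by rewrite -ge0_scaleC_subr // -quad_scale_subr.
split=> [|v]; first exact/hermitianmxB/hX/hermitianmxZ.
by rewrite quad_scale_subr ge0_scaleC_subr.
Qed.

Lemma loewner_le_scale_approx a X Y : psdmx X -> psdmx Y ->
  (forall e, 0 < e -> exists2 b, b < a + e & loewner_le X (b%:C%C *: Y)) ->
  loewner_le X (a%:C%C *: Y).
Proof.
move=> pX pY approx; apply/loewner_le_scaleP => // v.
apply: ler_pM_approx => [|e /approx[b lt_b /loewner_le_scaleP le_b]].
  by move: (pY.2 v); rewrite lecE => /andP[].
by exists b => //; apply: le_b.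
Qed.

Lemma psdmx_congr_diag_ge0 A P i : psdmx A -> 0 <= (P *m A *m P^t*) i i.
Proof.
case=> _ /(_ (row i P)); congr (_ <= _).
rewrite !mxE; apply: eq_bigr => k _; rewrite !mxE.
by congr (_ * _); apply: eq_bigr => l _; rewrite !mxE.
Qed.

(* Diagonalize A = P^* D P unitarily: then tr(AB) = sum_j D_jj (P B P^* )_jj,
   and both factors are diagonal entries of congruences of psd matrices. *)
Lemma psdmx_tr_mul_ge0 A B : psdmx A -> psdmx B -> 0 <= \tr (A *m B).
Proof.
move=> pA pB; set P := spectralmx A; set D := spectral_diag A.
have P_unitary : P \is unitarymx := spectral_unitarymx A.
have PPt : P *m P^t* = 1%:M by apply/unitarymxP.
have /orthomx_spectralP A_spectral : A \is normalmx by rewrite qualifE pA.1.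
rewrite invmx_unitary // -/P in A_spectral.
have diag_congr : diag_mx D = P *m A *m P^t*.
  by rewrite A_spectral !mulmxA PPt mul1mx -mulmxA PPt mulmx1.
rewrite A_spectral -!mulmxA mxtrace_mulC -!mulmxA mul_diag_mx.
rewrite /mxtrace; apply: sumr_ge0 => j _; rewrite mxE !mulmxA.
apply: mulr_ge0; last exact: psdmx_congr_diag_ge0.
by have := psdmx_congr_diag_ge0 P j pA; rewrite -diag_congr mxE eqxx mulr1n.
Qed.

Lemma frob_hermitian X : Defs.hermitianmx X ->
  frob X = Num.sqrt (complex.Re (\tr (X *m X))).
Proof. by rewrite /frob => ->. Qed.

Lemma sqr_frob_psd X : psdmx X -> frob X ^+ 2 = complex.Re (\tr (X *m X)).
Proof.
move=> pX; rewrite (frob_hermitian pX.1) sqr_sqrtr //.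
by move: (psdmx_tr_mul_ge0 pX pX); rewrite lecE => /andP[].
Qed.

Lemma frob_sub_hermitian X Y : Defs.hermitianmx X -> Defs.hermitianmx Y ->
  frob (X - Y) = Num.sqrt (complex.Re (\tr (X *m X)) + complex.Re (\tr (Y *m Y))
                           - 2 * complex.Re (\tr (X *m Y))).
Proof.
move=> hX hY; rewrite (frob_hermitian (hermitianmxB hX hY)).
rewrite mulmxBl !mulmxBr !raddfB /= (mxtrace_mulC Y X).
by congr Num.sqrt; lra.
Qed.

Lemma loewner_tr_cross a X Y :
  loewner_le X (a%:C%C *: Y) -> loewner_le Y (a%:C%C *: X) ->
  a * (complex.Re (\tr (X *m X)) + complex.Re (\tr (Y *m Y)))
    <= (a ^+ 2 + 1) * complex.Re (\tr (X *m Y)).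
Proof.
move=> leXY leYX; have := psdmx_tr_mul_ge0 leXY leYX.
have -> : \tr ((a%:C%C *: Y - X) *m (a%:C%C *: X - Y)) =
    (a%:C%C ^+ 2 + 1) * \tr (X *m Y) - a%:C%C * (\tr (X *m X) + \tr (Y *m Y)).
  rewrite mulmxBl !mulmxBr -!scalemxAl -!scalemxAr !raddfB /= !linearZ /=.
  rewrite (mxtrace_mulC Y X); ring.
case: (\tr (X *m X)) (\tr (Y *m Y)) (\tr (X *m Y)) => [? ?] [? ?] [? ?].
rewrite lecE /= => /andP[_]; nra.
Qed.

End PsdMatrices.

Section Thompson.
Variables (R : realType) (n : nat) (X Y : 'M[R[i]]_n).

Definition thompson_scales : set R :=
  [set a | 1 <= a /\ loewner_le X (a%:C%C *: Y) /\ loewner_le Y (a%:C%C *: X)].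

Lemma thompsonE :
  thompson X Y = ereal_inf [set (ln a)%:E | a in thompson_scales].
Proof. by []. Qed.

Lemma thompson_ge0 : (0 <= thompson X Y)%E.
Proof.
rewrite thompsonE; apply: le_ereal_inf_tmp => _ [a [a_ge1 _] <-].
by rewrite lee_fin ln_ge0.
Qed.

Lemma thompson_scales_approx d : thompson X Y = d%:E ->
  forall e, 0 < e -> exists2 a, thompson_scales a & a < expR d + e.
Proof.
move=> dXY e e_gt0; have de_gt0 : 0 < expR d + e by rewrite addr_gt0 ?expR_gt0.
have : (thompson X Y < (ln (expR d + e))%:E)%E.
  by rewrite dXY lte_fin -{1}(expRK d) ltr_ln ?posrE ?ltrDl ?expR_gt0.
rewrite thompsonE => /ereal_inf_lt[_ [a Sa <-]]; rewrite lte_fin => lt_ln.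
have a_gt0 : 0 < a by have := Sa.1; lra.
by exists a => //; rewrite -ltr_ln ?posrE.
Qed.

Lemma thompson_attained d : psdmx X -> psdmx Y -> thompson X Y = d%:E ->
  loewner_le X ((expR d)%:C%C *: Y) /\ loewner_le Y ((expR d)%:C%C *: X).
Proof.
move=> pX pY /thompson_scales_approx approx.
by split; apply: loewner_le_scale_approx => // e /approx[a [_ [leXY leYX]] lt_a];
  exists a.
Qed.

End Thompson.

Theorem mainTheorem2 (R : realType) (n : nat) (X Y : 'M[R[i]]_n) (d : R) :
  psdmx X -> psdmx Y -> thompson X Y = d%:E ->
  frob (X - Y) <= (expR d - 1) / Num.sqrt (expR (2 * d) + 1)
                   * Num.sqrt (frob X ^+ 2 + frob Y ^+ 2)
  /\ (expR d - 1) / Num.sqrt (expR (2 * d) + 1)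
                   * Num.sqrt (frob X ^+ 2 + frob Y ^+ 2)
     <= Num.sqrt 2 * ((expR d - 1) / Num.sqrt (expR (2 * d) + 1))
        * Num.max (frob X) (frob Y).
Proof.
move=> pX pY dXY.
have d_ge0 : 0 <= d by rewrite -lee_fin -dXY thompson_ge0.
have a_ge1 : 1 <= expR d by rewrite -expR0 ler_expR.
have [leXY leYX] := thompson_attained pX pY dXY.
have cross := loewner_tr_cross leXY leYX.
rewrite expRM_natl; split.
  rewrite (frob_sub_hermitian pX.1 pY.1) (sqr_frob_psd pX) (sqr_frob_psd pY).
  apply: sqrt_le_mulr_sqrt (thompson_coef_ge0 a_ge1) _.
  exact: sub_cross_le_thompson_coef cross.
rewrite (mulrC (Num.sqrt 2)) -[leRHS]mulrA.
apply: (ler_wpM2l (thompson_coef_ge0 a_ge1)).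
exact: sqrt_sum_sqr_le_max (sqrtr_ge0 _) (sqrtr_ge0 _).
Qed.
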